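(* Let $G$ be a finite simple graph without isolated vertices that contains exactly two odd cycles. Then $G$ is $(3,2)$-critical if and only if $G\in\mathcal A\cup\mathcal B$, where $\mathcal A=\{C_{2k+1}+C_{2\ell+1} : k,\ell\ge1\}$ ($+$ denotes disjoint union) and $\mathcal B$ is the family of graphs obtained from $C_{2k+1}+C_{2\ell+1}$, $k,\ell\ge1$, by identifying a vertex of $C_{2k+1}$ with a vertex of $C_{2\ell+1}$.
   Context: An odd cycle is a cycle (subgraph) of odd length. For a graph $G$, ${\rm es}_{\chi}(G)$ is the minimum number of edges of $G$ whose removal results in a spanning subgraph $G_1$ with $\chi(G_1)=\chi(G)-1$. $G$ is edge-stability critical if ${\rm es}_{\chi}(G-e)<{\rm es}_{\chi}(G)$ for every edge $e$. $G$ is $(3,2)$-critical if it is edge-stability critical with $\chi(G)=3$ and ${\rm es}_{\chi}(G)=2$. *)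

From mathcomp Require Import all_boot.
Set Implicit Arguments. Unset Strict Implicit. Unset Printing Implicit Defensive.

(* A finite simple graph on vertex set T (a finType) is given by its edge set
   E : {set {set T}}, every edge being a 2-element subset of T. *)
Section Graphs.
Variable T : finType.
Implicit Types (E F C : {set {set T}}) (V : {set T}).

Definition simple_graph E : Prop := forall e, e \in E -> #|e| = 2.

Definition no_isolated_vertex E : Prop :=
  forall x : T, exists2 e, e \in E & x \in e.

Definition colorable E (k : nat) : bool :=
  [exists f : {ffun T -> 'I_k},
     [forall x, forall y, ([set x; y] \in E) ==> (f x != f y)]].

(* chromatic number: least k admitting a proper k-colouring
   (#|T| colours always suffice, used as the default of the min). *)
Definition chi E : nat :=
  \big[minn/#|T|]_(k < #|T|.+1 | colorable E k) (k : nat).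

(* es_chi(G): least number of edges whose removal lowers chi by exactly one
   (default #|E| if no such set exists, which only happens when E is empty). *)
Definition es_chi E : nat :=
  \big[minn/#|E|]_(F : {set {set T}} |
        (F \subset E) && (chi (E :\: F) == (chi E).-1)) #|F|.

Definition edge_stability_critical E : Prop :=
  forall e, e \in E -> es_chi (E :\ e) < es_chi E.

Definition critical32 E : Prop :=
  [/\ edge_stability_critical E, chi E = 3 & es_chi E = 2].

Definition odd_cycle_on C V : Prop :=
  exists n (v : 'I_n -> T),
    [/\ 3 <= n, odd n, injective v,
        V = [set v i | i : 'I_n] &
        C = [set [set v i; v (ordS i)] | i : 'I_n]].

Definition odd_cycle C : Prop := exists V, odd_cycle_on C V.

Definition exactly_two_odd_cycles E : Prop :=
  exists C1 C2, C1 != C2 /\ [/\ C1 \subset E, C2 \subset E,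
                    odd_cycle C1, odd_cycle C2 &
                    forall C, C \subset E -> odd_cycle C -> C = C1 \/ C = C2].

Definition in_family_A E : Prop :=
  exists C1 V1 C2 V2, [/\ odd_cycle_on C1 V1, odd_cycle_on C2 V2,
     E = C1 :|: C2, V1 :|: V2 = setT & #|V1 :&: V2| = 0].

Definition in_family_B E : Prop :=
  exists C1 V1 C2 V2, [/\ odd_cycle_on C1 V1, odd_cycle_on C2 V2,
     E = C1 :|: C2, V1 :|: V2 = setT & #|V1 :&: V2| = 1].
End Graphs.

From mathcomp Require Import all_boot order zify_ssreflect.
Set Implicit Arguments. Unset Strict Implicit. Unset Printing Implicit Defensive.

(* Let C1, C2 be the two odd cycles of G.  Deleting one edge of each leaves no
   odd cycle, hence a bipartite graph, while any edge set whose deletion makes G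
   bipartite meets both cycles; so es_chi G = 2 as soon as chi G = 3 and C1, C2
   are edge-disjoint.
   If G is (3,2)-critical, an edge on both cycles could be deleted alone, and
   deleting an edge on neither cycle would keep es_chi = 2; hence E is the
   edge-disjoint union of C1 and C2.  Two common vertices u <> w would split
   both cycles into u-w paths, two of which form an odd closed walk missing an
   edge of each cycle, hence a third odd cycle.  So the cycles share at most one
   vertex, and they cover V since G has no isolated vertex.
   Conversely, pick non-adjacent u1 on C1 and u2 on C2 (equal if the cycles
   meet): a 2-colouring of G minus an edge at u1 and an edge at u2 becomes a
   3-colouring of G by recolouring u1 and u2, so chi G = 3 and es_chi G = 2,
   and deleting any edge leaves a single odd cycle, so es_chi drops to 1. *)

Section Colouring.
Variable T : finType.
Implicit Types (E F : {set {set T}}) (k : nat).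

Lemma simple_graphS E F : F \subset E -> simple_graph E -> simple_graph F.
Proof. by move=> sFE sE e /(subsetP sFE); apply: sE. Qed.

Lemma simple_edge_neq E x y : simple_graph E -> [set x; y] \in E -> x != y.
Proof. by move=> sE /sE; apply: contra_eqN => /eqP->; rewrite setUid cards1. Qed.

Lemma colorableS E F k : F \subset E -> colorable E k -> colorable F k.
Proof.
move=> sFE /existsP[f /forallP f_ok]; apply/existsP; exists f.
apply/forallP=> x; apply/forallP=> y; apply/implyP=> /(subsetP sFE) xyE.
by have /forallP/(_ y)/implyP := f_ok x; apply.
Qed.

Lemma colorable_leq E k k' : k <= k' -> colorable E k -> colorable E k'.
Proof.
move=> le_kk' /existsP[f /forallP f_ok]; apply/existsP.
exists [ffun x => widen_ord le_kk' (f x)]; apply/forallP=> x; apply/forallP=> y.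
by rewrite !ffunE; have /forallP/(_ y) := f_ok x.
Qed.

Lemma colorable_card E : simple_graph E -> colorable E #|T|.
Proof.
move=> sE; apply/existsP; exists [ffun x => enum_rank x].
apply/forallP=> x; apply/forallP=> y; apply/implyP=> /(simple_edge_neq sE).
by rewrite !ffunE; apply: contraNneq => /enum_rank_inj->.
Qed.

Lemma colorable_chi E : simple_graph E -> colorable E (chi E).
Proof.
move=> sE; apply: (big_ind (colorable E)) => //; first exact: colorable_card.
by move=> k k' colk colk'; rewrite /minn; case: ifP.
Qed.

Lemma chi_leP E k : simple_graph E -> reflect (colorable E k) (chi E <= k).
Proof.
move=> sE; apply: (iffP idP) => [le_chi_k | colk].
  exact: colorable_leq le_chi_k (colorable_chi sE).
have [le_kT | lt_Tk] := leqP k #|T|.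
  exact: (@Order.TotalTheory.bigmin_le_cond _ nat _ _ (Ordinal (le_kT : k < #|T|.+1)) _ _ colk).
exact: leq_trans (@Order.TotalTheory.bigmin_le_id _ nat _ _ _ _ _) (ltnW lt_Tk).
Qed.

Lemma chi_eq E k :
  simple_graph E -> colorable E k.+1 -> ~~ colorable E k -> chi E = k.+1.
Proof.
move=> sE colk1 ncolk; apply/eqP; rewrite eqn_leq (introT (chi_leP _ sE) colk1).
by rewrite ltnNge; apply: contra ncolk => /(chi_leP _ sE).
Qed.

Lemma es_chi_le E F : F \subset E -> chi (E :\: F) = (chi E).-1 -> es_chi E <= #|F|.
Proof.
move=> sFE chiF; apply: (@Order.TotalTheory.bigmin_le_cond _ nat _ _ F).
by rewrite sFE chiF eqxx.
Qed.

Lemma es_chi_ge E m : m <= #|E| ->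
    (forall F, F \subset E -> chi (E :\: F) = (chi E).-1 -> m <= #|F|) ->
  m <= es_chi E.
Proof.
move=> le_mE minF; apply/(@Order.TotalTheory.bigmin_geP _ nat); split=> // F /andP[sFE /eqP].
exact: minF.
Qed.

Lemma colorable_recolour E F k u1 u2 : simple_graph E -> colorable (E :\: F) k ->
    [set u1; u2] \notin E -> (forall e, e \in F -> (u1 \in e) || (u2 \in e)) ->
  colorable E k.+1.
Proof.
move=> sE /existsP[f /forallP f_ok] u12E F_u; apply/existsP.
pose special x := (x == u1) || (x == u2).
exists [ffun x => if special x then ord_max else widen_ord (leqnSn k) (f x)].
apply/forallP=> x; apply/forallP=> y; apply/implyP=> xyE; rewrite !ffunE.
have [sx | nsx] := boolP (special x); have [sy | nsy] := boolP (special y).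
- have sub : [set x; y] \subset [set u1; u2].
    by apply/subsetP=> z /set2P[]->; rewrite !inE.
  have /eqP exy : [set x; y] == [set u1; u2].
    by rewrite eqEcard sub (sE _ xyE) cards2; case: (_ != _).
  by move: u12E; rewrite -exy xyE.
- by rewrite -val_eqE /= gtn_eqF.
- by rewrite -val_eqE /= ltn_eqF.
have xyF : [set x; y] \notin F.
  apply/negP=> /F_u; rewrite !inE ![u1 == _]eq_sym ![u2 == _]eq_sym.
  by move: nsx nsy; rewrite /special; do 4 case: (_ == _).
by have /forallP/(_ y)/implyP := f_ok x; rewrite inE xyF xyE; apply.
Qed.

End Colouring.

Section Walks.
Variable T : finType.
Implicit Types (w c : nat -> T) (E C : {set {set T}}) (V : {set T}).

(* A walk w 0, w 1, ..., w n is given by w : nat -> T; values beyond n are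
   irrelevant. *)
Definition walk_edges n w : {set {set T}} := [set [set w i; w i.+1] | i : 'I_n].

Definition walk_vertices n w : {set T} := [set w i | i : 'I_n].

Definition rev_walk n w k := w (n - k).

Definition rot_walk n a w k := w ((a + k) %% n).

Definition cat_walk m w1 w2 k := if k <= m then w1 k else w2 (k - m).

Lemma walk_edgesP n w e :
  reflect (exists2 i, i < n & e = [set w i; w i.+1]) (e \in walk_edges n w).
Proof.
apply: (iffP imsetP) => [[i _ ->] | [i lt_in ->]]; first by exists i.
by exists (Ordinal lt_in).
Qed.

Lemma walk_edges_mem n w i : i < n -> [set w i; w i.+1] \in walk_edges n w.
Proof. by move=> lt_in; apply/walk_edgesP; exists i. Qed.

Lemma walk_verticesP n w x :
  reflect (exists2 i, i < n & x = w i) (x \in walk_vertices n w).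
Proof.
apply: (iffP imsetP) => [[i _ ->] | [i lt_in ->]]; first by exists i.
by exists (Ordinal lt_in).
Qed.

Lemma walk_edges_prefix m n w : m <= n -> walk_edges m w \subset walk_edges n w.
Proof.
move=> le_mn; apply/subsetP=> _ /walk_edgesP[i lt_im ->].
exact/walk_edges_mem/(leq_trans lt_im).
Qed.

Lemma walk_edges_suffix m n w :
  walk_edges (n - m) (fun k => w (m + k)) \subset walk_edges n w.
Proof.
apply/subsetP=> _ /walk_edgesP[i lt_i ->]; rewrite /= addnS.
apply: walk_edges_mem; lia.
Qed.

Lemma walk_edges_rev n w : walk_edges n (rev_walk n w) = walk_edges n w.
Proof.
apply/setP=> e; apply/walk_edgesP/walk_edgesP => -[i lt_in ->]; exists (n - i.+1).
all: try lia.
all: by rewrite /rev_walk setUC; congr [set w _; w _]; lia.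
Qed.

Lemma walk_edges_cat m n w1 w2 : w1 m = w2 0 ->
  walk_edges (m + n) (cat_walk m w1 w2) \subset walk_edges m w1 :|: walk_edges n w2.
Proof.
move=> w12; apply/subsetP=> _ /walk_edgesP[i lt_i ->]; rewrite inE /cat_walk.
case: (ltnP i m) => [lt_im | le_mi]; first by rewrite (ltnW lt_im) walk_edges_mem.
rewrite subSn //; case: leqP => [le_im | lt_mi]; last by rewrite walk_edges_mem ?orbT //; lia.
have -> : i = m by lia.
by rewrite subnn w12 (walk_edges_mem w2 (_ : 0 < n)) ?orbT //; lia.
Qed.

Lemma closed_walk_succ n w i : w n = w 0 -> i < n -> w i.+1 = w (i.+1 %% n).
Proof.
move=> wn lt_in; case: (ltngtP i.+1 n) => [lt_i1n | | ->]; last by rewrite modnn.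
  by rewrite modn_small.
by lia.
Qed.

Lemma walk_edges_rot n a w :
  w n = w 0 -> walk_edges n (rot_walk n a w) \subset walk_edges n w.
Proof.
move=> wn; apply/subsetP=> _ /walk_edgesP[i lt_in ->]; rewrite /rot_walk.
have n_gt0 : 0 < n by lia.
have -> : (a + i.+1) %% n = ((a + i) %% n).+1 %% n.
  by rewrite -[((a + i) %% n).+1]addn1 modnDml addn1 addnS.
rewrite -(closed_walk_succ wn (ltn_pmod _ n_gt0)).
exact: walk_edges_mem (ltn_pmod _ n_gt0).
Qed.

Lemma rot_walk_closed n a w : rot_walk n a w n = rot_walk n a w 0.
Proof. by rewrite /rot_walk modnDr addn0. Qed.

Definition cycle_walk n c : Prop :=
  [/\ 3 <= n, c n = c 0 & {in [pred i | i < n] &, injective c}].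

Lemma cycle_walk_eq n c i j : cycle_walk n c -> i <= n -> j <= n -> c i = c j ->
  i = j \/ (i = 0 /\ j = n) \/ (i = n /\ j = 0).
Proof.
case=> _ cn inj le_in le_jn.
have [lt_in | ->] : i < n \/ i = n by lia.
all: have [lt_jn | ->] : j < n \/ j = n by lia.
- by move/inj; auto.
- rewrite cn => ci0; have -> : i = 0 by apply: inj; rewrite ?inE //; lia.
  by auto.
- rewrite cn => c0j; have -> : j = 0 by apply: inj; rewrite ?inE //; lia.
  by auto.
- by left.
Qed.

Lemma cycle_walk_edge_inj n c i j : cycle_walk n c -> i < n -> j < n ->
  [set c i; c i.+1] = [set c j; c j.+1] -> i = j.
Proof.
move=> cw lt_in lt_jn eij; have [n3 _ _] := cw.
have /set2P[] : c i \in [set c j; c j.+1] by rewrite -eij set21.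
all: move=> /(cycle_walk_eq cw) eq1.
all: have /set2P[] : c i.+1 \in [set c j; c j.+1] by rewrite -eij set22.
all: move=> /(cycle_walk_eq cw) eq2.
all: have := eq1 ltac:(lia) ltac:(lia); have := eq2 ltac:(lia) ltac:(lia); lia.
Qed.

Lemma cycle_walk_edge_notin_prefix n c m : cycle_walk n c -> m < n ->
  [set c m; c m.+1] \notin walk_edges m c.
Proof.
move=> cw lt_mn; apply/walk_edgesP=> -[i lt_im /(cycle_walk_edge_inj cw lt_mn)].
by move=> /(_ (ltn_trans lt_im lt_mn)); lia.
Qed.

Lemma card_walk_edges n c : cycle_walk n c -> #|walk_edges n c| = n.
Proof.
move=> cw; rewrite card_in_imset ?card_ord // => i j _ _ /(cycle_walk_edge_inj cw).
by move=> /(_ (ltn_ord i) (ltn_ord j)) /val_inj.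
Qed.

Lemma card_walk_vertices n c : cycle_walk n c -> #|walk_vertices n c| = n.
Proof.
case=> _ _ inj; rewrite card_in_imset ?card_ord // => i j _ _ /inj.
by move=> /(_ (ltn_ord i) (ltn_ord j)) /val_inj.
Qed.

Lemma cycle_walk_rot n a c : cycle_walk n c -> cycle_walk n (rot_walk n a c).
Proof.
move=> cw; have [n3 cn inj] := cw; split=> //; first exact: rot_walk_closed.
have n_gt0 : 0 < n by lia.
move=> i j lt_in lt_jn /(inj _ _ (ltn_pmod _ n_gt0) (ltn_pmod _ n_gt0)) /eqP.
by rewrite eqn_modDl !modn_small // => /eqP.
Qed.

Lemma walk_edges_rot_cycle n a c :
  cycle_walk n c -> walk_edges n (rot_walk n a c) = walk_edges n c.
Proof.
move=> cw; have [_ cn _] := cw; apply/eqP; rewrite eqEcard walk_edges_rot //.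
by rewrite (card_walk_edges cw) (card_walk_edges (cycle_walk_rot a cw)) leqnn.
Qed.

Lemma walk_vertices_rot_cycle n a c :
  cycle_walk n c -> walk_vertices n (rot_walk n a c) = walk_vertices n c.
Proof.
move=> cw; have [n3 _ _] := cw; apply/eqP.
rewrite eqEcard (card_walk_vertices cw) (card_walk_vertices (cycle_walk_rot a cw)).
rewrite leqnn andbT.
apply/subsetP=> _ /walk_verticesP[i _ ->]; apply/walk_verticesP.
by exists ((a + i) %% n) => //; rewrite ltn_pmod //; lia.
Qed.

Lemma cycle_walk_rev n c : cycle_walk n c -> cycle_walk n (rev_walk n c).
Proof.
move=> cw; have [n3 cn _] := cw; split=> //; first by rewrite /rev_walk subnn subn0.
move=> i j lt_in lt_jn /(cycle_walk_eq cw (leq_subr _ _) (leq_subr _ _)).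
by rewrite !inE in lt_in lt_jn; lia.
Qed.

Lemma odd_cycle_walk_on n c : odd n -> cycle_walk n c ->
  odd_cycle_on (walk_edges n c) (walk_vertices n c).
Proof.
move=> odd_n [n3 cn inj]; exists n, (fun i : 'I_n => c i); split=> //.
- by move=> i j /(inj _ _ (ltn_ord i) (ltn_ord j)) /val_inj.
- by apply: eq_imset => i; rewrite /= (closed_walk_succ cn (ltn_ord i)).
Qed.

Lemma odd_cycle_on_walk C V : odd_cycle_on C V ->
  exists n c, [/\ odd n, cycle_walk n c, C = walk_edges n c & V = walk_vertices n c].
Proof.
case=> n [v [n3 odd_n inj_v -> ->]]; have n_gt0 : 0 < n by lia.
pose c k := v (Ordinal (ltn_pmod k n_gt0)).
have c_ord (i : 'I_n) : c i = v i by congr v; apply: val_inj; rewrite /= modn_small.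
have c_ordS (i : 'I_n) : c i.+1 = v (ordS i) by congr v; apply: val_inj.
exists n, c; split=> //.
- split=> //; first by congr v; apply: val_inj; rewrite /= modnn mod0n.
  move=> i j lt_in lt_jn /inj_v /(congr1 val) /=.
  by rewrite !modn_small.
- by apply: eq_imset => i; rewrite c_ord c_ordS.
- by apply: eq_imset => i; rewrite c_ord.
Qed.

Lemma odd_cycle_on_walk_at C V x : odd_cycle_on C V -> x \in V ->
  exists n c, [/\ odd n, cycle_walk n c, c 0 = x, C = walk_edges n c
                & V = walk_vertices n c].
Proof.
case/odd_cycle_on_walk=> n [c [odd_n cw -> ->]] /walk_verticesP[a lt_an ->].
exists n, (rot_walk n a c); split=> //; first exact: cycle_walk_rot.
- by rewrite /rot_walk addn0 modn_small.
- by rewrite walk_edges_rot_cycle.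
- by rewrite walk_vertices_rot_cycle.
Qed.

Lemma odd_cycle_on_card C V : odd_cycle_on C V -> 3 <= #|C| /\ 3 <= #|V|.
Proof.
case/odd_cycle_on_walk=> n [c [_ cw -> ->]]; have [n3 _ _] := cw.
by rewrite (card_walk_edges cw) (card_walk_vertices cw).
Qed.

Lemma odd_cycle_on_edge_sub C V e : odd_cycle_on C V -> e \in C -> e \subset V.
Proof.
case=> n [v [_ _ _ -> ->]] /imsetP[i _ ->].
by apply/subsetP=> y /set2P[]->; rewrite imset_f.
Qed.

Lemma odd_cycle_on_vertex_edge C V x :
  odd_cycle_on C V -> x \in V -> exists2 e, e \in C & x \in e.
Proof.
case=> n [v [_ _ _ -> ->]] /imsetP[i _ ->].
by exists [set v i; v (ordS i)]; [exact: imset_f | exact: set21].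
Qed.

Lemma odd_closed_walk_cycle n w : odd n -> w n = w 0 ->
  simple_graph (walk_edges n w) -> exists2 C, odd_cycle C & C \subset walk_edges n w.
Proof.
elim/ltn_ind: n w => n IH w odd_n wn simple_w.
have shorter k w' : k < n -> odd k -> w' k = w' 0 ->
    walk_edges k w' \subset walk_edges n w ->
  exists2 C, odd_cycle C & C \subset walk_edges n w.
  move=> lt_kn odd_k w'k sub.
  have [|C oddC subC] := IH k lt_kn w' odd_k w'k; first exact: simple_graphS sub simple_w.
  by exists C => //; apply: subset_trans subC sub.
(* A repeated vertex w i = w j splits the walk, rotated to start at w i, into
   two shorter closed walks, one of which is odd. *)
case: (boolP [exists i : 'I_n, exists j : 'I_n, (i < j) && (w i == w j)]).
  case/existsP=> i /existsP[j /andP[lt_ij /eqP wij]].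
  have lt_jn := ltn_ord j; pose w' := rot_walk n i w; pose m := j - i.
  have w'0 : w' 0 = w i by rewrite /w' /rot_walk addn0 modn_small.
  have w'm : w' m = w' 0 by rewrite w'0 wij /w' /rot_walk subnKC ?modn_small // ltnW.
  have /andP[m_gt0 lt_mn] : 0 < m < n by rewrite /m; lia.
  have sub_w' := walk_edges_rot i wn.
  have [odd_m | even_m] := boolP (odd m).
    apply: (shorter m w') => //.
    exact: subset_trans (walk_edges_prefix _ (ltnW lt_mn)) sub_w'.
  apply: (shorter (n - m) (fun k => w' (m + k))).
  - by lia.
  - by move: odd_n; rewrite -{1}(subnK (ltnW lt_mn)) oddD (negbTE even_m) addbF.
  - by rewrite /= addn0 subnKC ?(ltnW lt_mn) // w'm; apply: rot_walk_closed.
  - exact: subset_trans (walk_edges_suffix _ _ _) sub_w'.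
rewrite negb_exists => /forallP no_rep.
have n3 : 3 <= n.
  case: n {IH shorter no_rep} odd_n wn simple_w => [|[|[|n]]] // _ w1.
  by move=> /(_ _ (walk_edges_mem w (ltnSn 0))); rewrite w1 setUid cards1.
have inj_w : {in [pred i | i < n] &, injective w}.
  move=> i j lt_in lt_jn wij; apply/eqP; case: (ltngtP i j) => // [lt_ij | lt_ji].
    by have /existsPn/(_ (Ordinal lt_jn)) := no_rep (Ordinal lt_in); rewrite lt_ij wij eqxx.
  by have /existsPn/(_ (Ordinal lt_in)) := no_rep (Ordinal lt_jn); rewrite lt_ji wij eqxx.
exists (walk_edges n w) => //.
by exists (walk_vertices n w); apply: odd_cycle_walk_on.
Qed.

Lemma cycle_walk_not_subset_prefixU n c m (P : {set {set T}}) : cycle_walk n c -> m < n ->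
  [disjoint walk_edges n c & P] -> ~~ (walk_edges n c \subset walk_edges m c :|: P).
Proof.
move=> cw lt_mn dis; apply/subsetPn; exists [set c m; c m.+1]; first exact: walk_edges_mem.
by rewrite inE negb_or (cycle_walk_edge_notin_prefix cw lt_mn) (disjointFr dis) ?walk_edges_mem.
Qed.

End Walks.

Section DoubleCover.
Variables (T : finType) (r : rel T).

Definition double_cover : rel (T * bool) := fun p q => r p.1 q.1 && (q.2 == ~~ p.2).

Lemma double_cover_sym : symmetric r -> symmetric double_cover.
Proof. by move=> r_sym [x a] [y b]; rewrite /double_cover /= r_sym; case: a; case: b. Qed.

Lemma connect_double_cover a x b :
  connect r a x -> exists b', connect double_cover (a, b) (x, b').
Proof.
case/connectP=> p + ->; elim: p a b => [|y p IH] a b /=; first by exists b.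
case/andP=> r_ay /(IH y (~~ b))[b' conn]; exists b'.
by apply: connect_trans conn; apply: connect1; rewrite /double_cover /= r_ay eqxx.
Qed.

Lemma double_cover_path_last s p :
  path double_cover s p -> (last s p).2 = s.2 (+) odd (size p).
Proof.
elim: p s => [|q p IH] s /=; first by rewrite addbF.
by case/andP=> /andP[_ /eqP q2] /IH->; rewrite q2; case: s.2; case: odd.
Qed.

Lemma double_cover_2colouring : symmetric r ->
    (forall y, ~~ connect double_cover (y, true) (y, false)) ->
  exists f : T -> bool, forall x y, r x y -> f x != f y.
Proof.
move=> r_sym no_flip; have conn_sym := sym_connect_sym (double_cover_sym r_sym).
(* colour x by the parity of the walks joining it to the root of its component *)
pose f x := connect double_cover (root r x, false) (x, true); exists f => x y r_xy.
rewrite /f (_ : root r y = root r x); last first.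
  by apply/esym/(rootP (sym_connect_sym r_sym))/connect1.
set z := root r x.
case fx: (connect _ (z, false) (x, true)); case fy: (connect _ (z, false) (y, true)) => //.
  have zy : connect double_cover (z, false) (y, false).
    by apply: connect_trans fx (connect1 _); rewrite /double_cover /= r_xy.
  by move: (no_flip y); rewrite conn_sym in fy; rewrite (connect_trans fy zy).
have : connect r z x by rewrite (sym_connect_sym r_sym) connect_root.
case/(connect_double_cover false) => -[] zx; first by rewrite zx in fx.
have zy : connect double_cover (z, false) (y, true).
  by apply: connect_trans zx (connect1 _); rewrite /double_cover /= r_xy.
by rewrite zy in fy.
Qed.

End DoubleCover.

Section OddCycles.
Variable T : finType.
Implicit Types (E F C : {set {set T}}) (V : {set T}).

Lemma colorable2_no_odd_cycle E : simple_graph E ->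
  (forall C, C \subset E -> ~ odd_cycle C) -> colorable E 2.
Proof.
move=> sE no_odd; pose r x y := [set x; y] \in E.
have r_sym : symmetric r by move=> x y; rewrite /r setUC.
have [y | f f_ok] := double_cover_2colouring r_sym.
  apply/negP=> /connectP[p p_path p_last].
  have odd_p : odd (size p).
    by have := double_cover_path_last p_path; rewrite -p_last /=; case: odd.
  pose w i := (nth (y, true) ((y, true) :: p) i).1.
  have w_E : walk_edges (size p) w \subset E.
    apply/subsetP=> _ /walk_edgesP[i lt_ip ->].
    by move/(pathP (y, true)): p_path => /(_ i lt_ip)/andP[].
  have w_closed : w (size p) = w 0 by rewrite /w -last_nth -p_last.
  have [C oddC subC] := odd_closed_walk_cycle odd_p w_closed (simple_graphS w_E sE).
  exact: no_odd C (subset_trans subC w_E) oddC.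
apply/existsP; exists [ffun x => if f x then ord_max else ord0 : 'I_2].
apply/forallP=> x; apply/forallP=> y; apply/implyP=> /f_ok.
by rewrite !ffunE; case: (f x); case: (f y).
Qed.

Lemma odd_closed_walk_not_colorable2 E n w :
  odd n -> w n = w 0 -> walk_edges n w \subset E -> ~~ colorable E 2.
Proof.
move=> odd_n wn sub; apply/negP=> /existsP[f /forallP f_ok].
pose b i := f (w i) == ord0.
have b_flip i : i < n -> b i.+1 = ~~ b i.
  move=> lt_in; have /forallP/(_ (w i.+1))/implyP := f_ok (w i).
  move=> /(_ (subsetP sub _ (walk_edges_mem w lt_in))); rewrite /b.
  by case: (f (w i)) => [[|[|?]] ?]; case: (f (w i.+1)) => [[|[|?]] ?].
have b_parity i : i <= n -> b i = b 0 (+) odd i.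
  by elim: i => [|i IH] lt_in /=; rewrite ?addbF // b_flip // IH 1?ltnW // addbN.
by move: (b_parity n (leqnn n)); rewrite /b wn odd_n addbT; case: (_ == _).
Qed.

Lemma odd_cycle_not_colorable2 E C : odd_cycle C -> C \subset E -> ~~ colorable E 2.
Proof.
case=> V /odd_cycle_on_walk[n [c [odd_n [_ cn _] -> _]]].
exact: odd_closed_walk_not_colorable2.
Qed.

Lemma odd_cycle_card C : odd_cycle C -> 3 <= #|C|.
Proof. by case=> V /odd_cycle_on_card[]. Qed.

Lemma odd_cycle_edge C : odd_cycle C -> exists e, e \in C.
Proof. by move=> oddC; apply/card_gt0P; apply: leq_trans (odd_cycle_card oddC). Qed.

Lemma chi_odd_cycle E C : simple_graph E -> odd_cycle C -> C \subset E ->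
  colorable E 3 -> chi E = 3.
Proof. by move=> sE oddC sCE col3; apply: chi_eq (odd_cycle_not_colorable2 oddC sCE). Qed.

Lemma chi_bipartite E e : simple_graph E -> colorable E 2 -> e \in E -> chi E = 2.
Proof.
move=> sE col2 eE; apply: chi_eq => //; apply/negP=> /existsP[f /forallP f_ok].
have /cards2P[x [y [_ exy]]] : #|e| == 2 by rewrite sE.
have /forallP/(_ y)/implyP := f_ok x; rewrite -exy => /(_ eE).
by rewrite (ord1 (f x)) (ord1 (f y)).
Qed.

Lemma es_chi_ge2 E C1 C2 : simple_graph E -> odd_cycle C1 -> odd_cycle C2 ->
  C1 \subset E -> C2 \subset E -> [disjoint C1 & C2] -> chi E = 3 -> 2 <= es_chi E.
Proof.
move=> sE odd1 odd2 s1 s2 dis chi3.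
apply: es_chi_ge => [|F sFE].
  exact: ltnW (leq_trans (odd_cycle_card odd1) (subset_leq_card s1)).
rewrite chi3 => chiF.
have hit C : odd_cycle C -> C \subset E -> exists2 e, e \in C & e \in F.
  move=> oddC sCE; case: (boolP (C \subset E :\: F)) => [sCEF | /subsetPn[e eC]].
    have /(chi_leP 2 (simple_graphS (subsetDl E F) sE)) : chi (E :\: F) <= 2 by rewrite chiF.
    by rewrite (negbTE (odd_cycle_not_colorable2 oddC sCEF)).
  by rewrite inE (subsetP sCE e eC) andbT negbK; exists e.
have [e1 e1C1 e1F] := hit C1 odd1 s1; have [e2 e2C2 e2F] := hit C2 odd2 s2.
have neq_e12 : e1 != e2 by apply: contraTneq e2C2 => <-; rewrite (disjointFr dis).
have : [set e1; e2] \subset F by apply/subsetP=> e /set2P[]->.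
by move/subset_leq_card; rewrite cards2 neq_e12.
Qed.

Lemma odd_cycles_disjoint_of_meet E C1 C2 V1 V2 : simple_graph E -> C1 \subset E ->
    odd_cycle_on C1 V1 -> odd_cycle_on C2 V2 -> #|V1 :&: V2| <= 1 ->
  [disjoint C1 & C2].
Proof.
move=> sE s1 oc1 oc2 meet; rewrite disjoint_subset; apply/subsetP=> e eC1; apply/negP=> eC2.
have : e \subset V1 :&: V2.
  by rewrite subsetI (odd_cycle_on_edge_sub oc1 eC1) (odd_cycle_on_edge_sub oc2 eC2).
by move/subset_leq_card/leq_trans/(_ meet); rewrite (sE _ (subsetP s1 e eC1)).
Qed.

Lemma odd_cycles_nonadjacent_pair E C1 C2 V1 V2 : simple_graph E -> E = C1 :|: C2 ->
    odd_cycle_on C1 V1 -> odd_cycle_on C2 V2 ->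
  exists u1 u2, [/\ u1 \in V1, u2 \in V2 & [set u1; u2] \notin E].
Proof.
move=> sE EC oc1 oc2.
have [/set0Pn[x /setIP[x1 x2]] | /negPn/eqP V12] := boolP (V1 :&: V2 != set0).
  by exists x, x; split=> //; apply/negP=> /(simple_edge_neq sE); rewrite eqxx.
have [_ V1_3] := odd_cycle_on_card oc1; have [_ V2_3] := odd_cycle_on_card oc2.
have /card_gt0P[u1 u1V1] : 0 < #|V1| by lia.
have /card_gt0P[u2 u2V2] : 0 < #|V2| by lia.
exists u1, u2; split=> //; rewrite EC inE; apply/negP.
case/orP=> [/(odd_cycle_on_edge_sub oc1) | /(odd_cycle_on_edge_sub oc2)] /subsetP sub.
  have : u2 \in V1 :&: V2 by rewrite inE u2V2 sub ?set22.
  by rewrite V12 inE.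
have : u1 \in V1 :&: V2 by rewrite inE u1V1 sub ?set21.
by rewrite V12 inE.
Qed.

Lemma only_odd_cycles_of_exactly_two E C1 C2 : exactly_two_odd_cycles E ->
    C1 != C2 -> C1 \subset E -> C2 \subset E -> odd_cycle C1 -> odd_cycle C2 ->
  forall C, C \subset E -> odd_cycle C -> C = C1 \/ C = C2.
Proof.
case=> [D1 [D2 [_ [_ _ _ _ only_D]]]] + s1 s2 odd1 odd2 C sCE oddC.
case: (only_D _ s1 odd1) => ->; case: (only_D _ s2 odd2) => ->; rewrite ?eqxx // => _.
all: by case: (only_D C sCE oddC) => ->; auto.
Qed.

End OddCycles.

Section TwoOddCycles.
Variables (T : finType) (E C1 C2 : {set {set T}}).
Hypotheses (sE : simple_graph E) (odd1 : odd_cycle C1) (odd2 : odd_cycle C2).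
Hypotheses (s1 : C1 \subset E) (s2 : C2 \subset E).
Implicit Type C : {set {set T}}.
Hypothesis only_C12 : forall C, C \subset E -> odd_cycle C -> C = C1 \/ C = C2.

Lemma chi_delete_cycle_edges e1 e2 :
  e1 \in C1 -> e2 \in C2 -> chi (E :\: [set e1; e2]) = 2.
Proof.
move=> e1C1 e2C2; have sEF := simple_graphS (subsetDl E [set e1; e2]) sE.
have [e eC1 eF] : exists2 e, e \in C1 & e \notin [set e1; e2].
  apply/subsetPn/negP=> sub; have := leq_trans (odd_cycle_card odd1) (subset_leq_card sub).
  by rewrite cards2; case: (_ != _).
apply: (chi_bipartite sEF _ (_ : e \in _)); last by rewrite inE eF (subsetP s1).
apply: colorable2_no_odd_cycle sEF _ => C sCF oddC.
have [eC | eC] := only_C12 (subset_trans sCF (subsetDl _ _)) oddC; rewrite eC in sCF.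
- by move: (subsetP sCF e1 e1C1); rewrite inE set21.
- by move: (subsetP sCF e2 e2C2); rewrite inE set22.
Qed.

Lemma es_chi_delete_edge e : [disjoint C1 & C2] -> colorable E 3 ->
  e \in C1 :|: C2 -> es_chi (E :\ e) <= 1.
Proof.
move=> dis col3 eC12; have sEe := simple_graphS (subsetDl E [set e]) sE.
have [C [f [oddC sCE eC fC chi2]]] : exists C f,
    [/\ odd_cycle C, C \subset E, e \notin C, f \in C & chi (E :\: [set e; f]) = 2].
  have [[f1 fC1] [f2 fC2]] := (odd_cycle_edge odd1, odd_cycle_edge odd2).
  case/setUP: eC12 => eC.
    by exists C2, f2; rewrite (disjointFr dis) ?chi_delete_cycle_edges.
  by exists C1, f1; rewrite (disjointFl dis) // setUC chi_delete_cycle_edges.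
have sCEe : C \subset E :\ e.
  by apply/subsetP=> g gC; rewrite !inE (subsetP sCE) // andbT; apply: contraNneq eC => <-.
have chi3 := chi_odd_cycle sEe oddC sCEe (colorableS (subsetDl _ _) col3).
rewrite -(cards1 f); apply: es_chi_le; first by rewrite sub1set (subsetP sCEe).
by rewrite chi3 setDDl.
Qed.

Lemma critical_cycles_disjoint : chi E = 3 -> es_chi E = 2 -> [disjoint C1 & C2].
Proof.
move=> chi3 es2; rewrite disjoint_subset; apply/subsetP=> e eC1; apply/negP=> eC2.
have : es_chi E <= #|[set e]|.
  apply: es_chi_le; first by rewrite sub1set (subsetP s1).
  by rewrite chi3 -[[set e]]setUid chi_delete_cycle_edges.
by rewrite es2 cards1.
Qed.

Lemma critical_edges_on_cycles : critical32 E -> E = C1 :|: C2.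
Proof.
case=> crit chi3 es2; apply/eqP; rewrite eqEsubset subUset s1 s2 !andbT.
apply/subsetP=> f fE; apply: contraT; rewrite inE negb_or => /andP[fC1 fC2].
have sub C : f \notin C -> C \subset E -> C \subset E :\ f.
  move=> fC sCE; apply/subsetP=> g gC; rewrite !inE (subsetP sCE) // andbT.
  by apply: contraNneq fC => <-.
have sEf := simple_graphS (subsetDl E [set f]) sE.
have col3 : colorable (E :\ f) 3.
  by apply: colorableS (subsetDl _ _) _; rewrite -chi3 colorable_chi.
have chi3f := chi_odd_cycle sEf odd1 (sub _ fC1 s1) col3.
have dis := critical_cycles_disjoint chi3 es2.
have := es_chi_ge2 sEf odd1 odd2 (sub _ fC1 s1) (sub _ fC2 s2) dis chi3f.
by rewrite leqNgt -es2 crit.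
Qed.

Lemma cycle_walks_meet_even n1 n2 c1 c2 b d : [disjoint C1 & C2] ->
    cycle_walk n1 c1 -> cycle_walk n2 c2 -> C1 = walk_edges n1 c1 -> C2 = walk_edges n2 c2 ->
    c1 0 = c2 0 -> c1 b = c2 d -> b < n1 -> d < n2 ->
  ~~ odd (b + d).
Proof.
move=> dis cw1 cw2 C1E C2E c12_0 c12_bd lt_b lt_d; apply/negP=> odd_bd.
(* Go from c1 0 to c1 b along C1 and back along C2: the odd cycle in this walk
   misses the edge of C1 at b and the edge of C2 at d. *)
pose W := cat_walk b c1 (rev_walk d c2).
have W_sub : walk_edges (b + d) W \subset walk_edges b c1 :|: walk_edges d c2.
  by rewrite -(walk_edges_rev d c2) walk_edges_cat // /rev_walk subn0.
have [P1 P2] : walk_edges b c1 \subset C1 /\ walk_edges d c2 \subset C2.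
  by rewrite C1E C2E !walk_edges_prefix // ltnW.
have W_E : walk_edges (b + d) W \subset E.
  by rewrite (subset_trans W_sub) // subUset (subset_trans P1 s1) (subset_trans P2 s2).
have W_closed : W (b + d) = W 0.
  rewrite /W /cat_walk leq0n; case: leqP => [le_db | _]; last by rewrite /rev_walk addKn subnn.
  have d0 : d = 0 by lia.
  by rewrite d0 addn0 c12_bd d0 c12_0.
have [C oddC sCW] := odd_closed_walk_cycle odd_bd W_closed (simple_graphS W_E sE).
have sCP := subset_trans sCW W_sub.
have [eC | eC] := only_C12 (subset_trans sCW W_E) oddC.
- have := @cycle_walk_not_subset_prefixU _ n1 c1 b (walk_edges d c2) cw1 lt_b.
  by rewrite -C1E (disjointWr P2 dis) -eC sCP => /(_ isT).
- have := @cycle_walk_not_subset_prefixU _ n2 c2 d (walk_edges b c1) cw2 lt_d.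
  rewrite disjoint_sym in dis.
  by rewrite -C2E (disjointWr P1 dis) -eC setUC sCP => /(_ isT).
Qed.

Lemma odd_cycles_meet_le1 V1 V2 : [disjoint C1 & C2] ->
  odd_cycle_on C1 V1 -> odd_cycle_on C2 V2 -> #|V1 :&: V2| <= 1.
Proof.
move=> dis oc1 oc2; rewrite leqNgt; apply/negP=> /card_gt1P[u [x [/setIP[u1 u2] /setIP[x1 x2]]]].
have [n1 [c1 [_ cw1 c1u C1E V1E]]] := odd_cycle_on_walk_at oc1 u1.
have [n2 [c2 [odd_n2 cw2 c2u C2E V2E]]] := odd_cycle_on_walk_at oc2 u2.
move: x1 x2; rewrite V1E V2E => /walk_verticesP[b lt_b ->] /walk_verticesP[d lt_d c12] neq_ub.
have c12_0 : c1 0 = c2 0 by rewrite c1u c2u.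
have d_gt0 : 0 < d by rewrite lt0n; apply: contraNneq neq_ub => d0; rewrite c12 d0 c2u.
have even_bd := cycle_walks_meet_even dis cw1 cw2 C1E C2E c12_0 c12 lt_b lt_d.
(* Reversing c2 turns d into n2 - d; as n2 is odd, b + (n2 - d) is odd when
   b + d is even. *)
have [_ c2n _] := cw2.
have C2E' : C2 = walk_edges n2 (rev_walk n2 c2) by rewrite walk_edges_rev.
have c12_0' : c1 0 = rev_walk n2 c2 0 by rewrite /rev_walk subn0 c2n.
have c12' : c1 b = rev_walk n2 c2 (n2 - d) by rewrite /rev_walk subKn // ltnW.
have lt_d' : n2 - d < n2 by lia.
have := cycle_walks_meet_even dis cw1 (cycle_walk_rev cw2) C1E C2E' c12_0' c12' lt_b lt_d'.
by rewrite oddD oddB ?(ltnW lt_d) // odd_n2 addTb addbN negbK -oddD (negbTE even_bd).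
Qed.

Lemma critical32_of_cycles V1 V2 : odd_cycle_on C1 V1 -> odd_cycle_on C2 V2 ->
  E = C1 :|: C2 -> #|V1 :&: V2| <= 1 -> critical32 E.
Proof.
move=> oc1 oc2 EC meet; have dis := odd_cycles_disjoint_of_meet sE s1 oc1 oc2 meet.
have [u1 [u2 [u1V1 u2V2 u12E]]] := odd_cycles_nonadjacent_pair sE EC oc1 oc2.
have [e1 e1C1 u1e1] := odd_cycle_on_vertex_edge oc1 u1V1.
have [e2 e2C2 u2e2] := odd_cycle_on_vertex_edge oc2 u2V2.
have chi2 := chi_delete_cycle_edges e1C1 e2C2.
have col3 : colorable E 3.
  apply: (colorable_recolour (F := [set e1; e2])) sE _ u12E _.
    by apply/(chi_leP 2 (simple_graphS (subsetDl _ _) sE)); rewrite chi2.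
  by move=> e /set2P[]->; rewrite ?u1e1 ?u2e2 ?orbT.
have chi3 := chi_odd_cycle sE odd1 s1 col3.
have es2 : es_chi E = 2.
  apply/eqP; rewrite eqn_leq (es_chi_ge2 sE odd1 odd2 s1 s2 dis chi3) andbT.
  have sub12 : [set e1; e2] \subset E.
    by apply/subsetP=> e /set2P[]->; [exact: (subsetP s1) | exact: (subsetP s2)].
  apply: leq_trans (es_chi_le sub12 _) _; first by rewrite chi3 chi2.
  by rewrite cards2; case: (_ != _).
split=> // e eE; rewrite es2 ltnS; apply: es_chi_delete_edge dis col3 _.
by rewrite -EC.
Qed.

Lemma critical32_in_family :
  no_isolated_vertex E -> critical32 E -> in_family_A E \/ in_family_B E.
Proof.
move=> noiso crit; have [_ chi3 es2] := crit.
have dis := critical_cycles_disjoint chi3 es2; have EC := critical_edges_on_cycles crit.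
have [V1 oc1] := odd1; have [V2 oc2] := odd2.
have cover : V1 :|: V2 = setT.
  apply/setP=> x; rewrite !inE; have [e] := noiso x; rewrite EC => /setUP[] eC xe.
    by rewrite (subsetP (odd_cycle_on_edge_sub oc1 eC) x xe).
  by rewrite (subsetP (odd_cycle_on_edge_sub oc2 eC) x xe) orbT.
case: (leqP #|V1 :&: V2| 0) (odd_cycles_meet_le1 dis oc1 oc2) => [meet0 _ | meet1 meet].
  by left; exists C1, V1, C2, V2; split=> //; apply/eqP; rewrite -leqn0.
by right; exists C1, V1, C2, V2; split=> //; apply/eqP; rewrite eqn_leq meet.
Qed.

End TwoOddCycles.

Lemma critical32_of_family (T : finType) (E : {set {set T}}) :
  simple_graph E -> exactly_two_odd_cycles E ->
  in_family_A E \/ in_family_B E -> critical32 E.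
Proof.
move=> sE two family; have [C1 [V1 [C2 [V2 [oc1 oc2 EC meet]]]]] : exists C1 V1 C2 V2,
    [/\ odd_cycle_on C1 V1, odd_cycle_on C2 V2, E = C1 :|: C2 & #|V1 :&: V2| <= 1].
  by case: family => -[C1 [V1 [C2 [V2 [oc1 oc2 EC _ meet]]]]]; exists C1, V1, C2, V2; rewrite meet.
have [odd1 odd2] : odd_cycle C1 /\ odd_cycle C2 by split; [exists V1 | exists V2].
have [s1 s2] : C1 \subset E /\ C2 \subset E by rewrite EC subsetUl subsetUr.
have dis := odd_cycles_disjoint_of_meet sE s1 oc1 oc2 meet.
have [f fC1] := odd_cycle_edge odd1.
have neq12 : C1 != C2 by apply/eqP=> eq12; move: (disjointFr dis fC1); rewrite -eq12 fC1.
have only12 := only_odd_cycles_of_exactly_two two neq12 s1 s2 odd1 odd2.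
exact: (critical32_of_cycles sE odd1 odd2 s1 s2 only12 oc1 oc2 EC meet).
Qed.

Theorem theorem2p2 (T : finType) (E : {set {set T}}) :
  simple_graph E -> no_isolated_vertex E -> exactly_two_odd_cycles E ->
  (critical32 E <-> in_family_A E \/ in_family_B E).
Proof.
move=> sE noiso two; split; last exact: critical32_of_family.
have [C1 [C2 [_ [s1 s2 odd1 odd2 only12]]]] := two.
exact: (critical32_in_family sE odd1 odd2 s1 s2 only12).
Qed.
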